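(* Let $X$ be a compact metric space, $T:X\to X$ continuous, $\mathcal U$ a partition of $X$ into finitely many closed-open sets, $N\in\mathbb N$, $s\in\mathbb R$ and $f:X\to\mathbb R$ continuous. (i) If $E_1\subseteq E_2\subseteq\cdots$ and $\bigcup_iE_i=E$, then $M_N^s(\mathcal U,f,E)=\lim_{i\to\infty}M_N^s(\mathcal U,f,E_i)$. (ii) If $Z\subseteq X$ is analytic, then $M_N^s(\mathcal U,f,Z)=\sup\{M_N^s(\mathcal U,f,K):K\subseteq Z,\ K\text{ compact}\}$.
   Context: $f_n=\sum_{i=0}^{n-1}f\circ T^i$. $\mathcal W_n(\mathcal U)$ is the set of strings $\mathbf U=U_1\cdots U_n$ with $U_i\in\mathcal U$; $m(\mathbf U)=n$ is its length, and $X(\mathbf U)=\{x\in X:T^{j-1}x\in U_j,\ j=1,\dots,n\}$. A family $\Lambda\subseteq\bigcup_n\mathcal W_n(\mathcal U)$ covers $Z$ if $\bigcup_{\mathbf U\in\Lambda}X(\mathbf U)\supseteq Z$. Define $M_N^s(\mathcal U,f,Z)=\inf_\Lambda\sum_{\mathbf U\in\Lambda}\exp\big(-sm(\mathbf U)+\sup_{y\in X(\mathbf U)}f_{m(\mathbf U)}(y)\big)$, infimum over all $\Lambda\subseteq\bigcup_{n\ge N}\mathcal W_n(\mathcal U)$ covering $Z$, with the convention $\sup_{y\in\emptyset}=-\infty$. A set is analytic if it is a continuous image of $\mathbb N^{\mathbb N}$ with the product topology. *)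

From HB Require Import structures.
From mathcomp Require Import all_boot all_order all_algebra.
From mathcomp Require Import all_classical all_reals all_analysis.
Set Implicit Arguments.
Unset Strict Implicit.
Unset Printing Implicit Defensive.
Import Order.TTheory GRing.Theory Num.Theory numFieldTopology.Exports.
Local Open Scope classical_set_scope.
Local Open Scope ring_scope.

Definition baire_space : topologicalType := {ptws nat -> nat}.

Section Pressure.
Context {R : realType} {X : metricType R}.

Definition analytic (Z : set X) : Prop :=
  exists g : baire_space -> X, continuous g /\ range g = Z.

Definition clopen_partition (U : set (set X)) : Prop :=
  [/\ finite_set U,
      (forall A, U A -> A !=set0),
      (forall A B, U A -> U B -> A <> B -> A `&` B = set0),
      \bigcup_(A in U) A = setT &
      (forall A, U A -> open A /\ closed A)].

Definition birkhoff_sum (T : X -> X) (f : X -> R) (n : nat) (x : X) : R :=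
  \sum_(i < n) f (iter i T x).

(* X(U_1 ... U_n) = {x : T^{j-1} x \in U_j, j = 1..n}  (0-indexed here) *)
Definition cyl (T : X -> X) (w : seq (set X)) : set X :=
  [set x | forall j, (j < size w)%N -> nth set0 w j (iter j T x)].

(* exp(-s m(U) + sup_{y in X(U)} f_{m(U)}(y)), with sup over empty = -oo *)
Definition string_weight (T : X -> X) (f : X -> R) (s : R) (w : seq (set X))
  : \bar R :=
  expeR ((- s * (size w)%:R)%:E +
         ereal_sup [set (birkhoff_sum T f (size w) y)%:E | y in cyl T w])%E.

Definition admissible (T : X -> X) (U : set (set X)) (N : nat) (Z : set X)
  (L : set (seq (set X))) : Prop :=
  (forall w, L w ->
     (N <= size w)%N /\ (forall j, (j < size w)%N -> U (nth set0 w j))) /\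
  Z `<=` \bigcup_(w in L) cyl T w.

Definition MNs (T : X -> X) (U : set (set X)) (f : X -> R) (N : nat) (s : R)
  (Z : set X) : \bar R :=
  ereal_inf [set esum L (string_weight T f s) | L in admissible T U N Z].

End Pressure.

From HB Require Import structures.
From mathcomp Require Import all_boot all_order all_algebra.
From mathcomp Require Import all_classical all_reals all_analysis.
From mathcomp Require Import finmap ring lra.
Import Order.TTheory GRing.Theory Num.Theory numFieldTopology.Exports.
Local Open Scope classical_set_scope.
Local Open Scope ring_scope.

(* (i) Only [M (\bigcup_i E_ i) <= sup_i M (E_ i)] needs work.  Take covers
   [Lam i] of [E_ i] of weight below [M (E_ i) + e / 2^(i+1)].  Since [U] is a
   partition, two strings whose cylinders meet are prefix-comparable, so the
   prefix-minimal strings of [Lam 0 `|` ... `|` Lam i] still cover [E_ i], with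
   weight below [M (E_ i) + e].  The prefix-minimal strings of [\bigcup_i Lam i]
   cover [E], and each finite subfamily of them lies in one of these covers.
   (ii) Let [Z = range g] with [g] continuous on [N^N] and [M Z > r > sup M K].
   Applying (i) to [{t | t_j <= m_j (j < k)} = \bigcup_v {t | t_j <= m_j (j < k),
   t_k <= v}] one chooses bounds [m] with [M (g @` {t | t_j <= m_j (j < k)}) > r]
   for every [k].  Then [K = g @` {t | forall j, t_j <= m_j}] is compact, and any
   cover of [K] by cylinders is open, so by a tube lemma it covers one of the sets
   [g @` {t | t_j <= m_j (j < k)}]; hence [M K >= r], a contradiction. *)

Lemma esum_subset [R : realType] [T : choiceType] [A B : set T] (a : T -> \bar R) :
  A `<=` B -> (esum A a <= esum B a)%E.
Proof.
move=> AB; apply: ge_ereal_sup => _ [F [finF FA] <-].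
by apply: esum_ge; exists F => //; split => // x /FA /AB.
Qed.

Lemma esum_setU_le [R : realType] [T : choiceType] (A B : set T) (a : T -> \bar R) :
  (forall x, (A `|` B) x -> 0 <= a x)%E ->
  (esum (A `|` B) a <= esum A a + esum B a)%E.
Proof.
move=> a0; rewrite (esumID A) //.
by apply: leeD; apply: esum_subset => x [[]].
Qed.

Lemma lte_EFin_between (R : realType) (x y : \bar R) : (x < y)%E ->
  exists r : R, (x < r%:E < y)%E.
Proof.
case: x => [a||]; case: y => [b||] //= xy.
- by exists ((a + b) / 2); rewrite !lte_fin !midf_lt.
- by exists (a + 1); rewrite lte_fin ltrDl ltr01 ltry.
- by exists (b - 1); rewrite ltNyr lte_fin gtrDl ltrN10.
- by exists 0; rewrite ltNyr ltry.
Qed.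

Lemma finite_subset_bigsetU {T : choiceType} {G : nat -> set T} {F : set T} :
  finite_set F -> F `<=` \bigcup_k G k ->
  exists n, F `<=` \big[setU/set0]_(k < n) G k.
Proof.
move=> finF FG.
have /choice[i iG] : forall x, exists k, F x -> G k x.
  by move=> x; have [/FG[k _ Gk]|nFx] := pselect (F x); [exists k | exists 0%N].
exists (\max_(x <- fset_set F) i x).+1 => x Fx.
apply: (bigsetU_sup _ (iG x Fx)); rewrite ltnS.
by apply: leq_bigmax_seq => //; rewrite in_fset_set // mem_set.
Qed.

Lemma branch_choice (T : pointedType) (P : seq T -> Prop) :
  P [::] -> (forall b, P b -> exists v, P (rcons b v)) ->
  exists m : nat -> T, forall k, P (mkseq m k).
Proof.
move=> P0 Pstep.
have /choice[next Pnext] : forall b, exists v, P b -> P (rcons b v).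
  by move=> b; have [/Pstep[v Pv]|nPb] := pselect (P b); [exists v | exists point].
pose fix branch k := if k is k'.+1 then rcons (branch k') (next (branch k')) else [::].
have branchE k : branch k = mkseq (fun j => last point (branch j.+1)) k.
  by elim: k => [|k IH] //=; rewrite mkseqS -IH last_rcons.
exists (fun j => last point (branch j.+1)) => k; rewrite -branchE.
by elim: k => //= k; apply: Pnext.
Qed.

Section PrefixMinimal.
Context {T : Type}.
Implicit Types (A B L : set (seq T)) (w : seq T).

Definition prefix_minimal L : set (seq T) :=
  [set w | L w /\ forall k, (k < size w)%N -> ~ L (take k w)].

Lemma prefix_minimal_sub L : prefix_minimal L `<=` L.
Proof. by move=> w []. Qed.

Lemma prefix_minimal_exists {L w} : L w ->
  exists2 k, (k <= size w)%N & prefix_minimal L (take k w).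
Proof.
move=> Lw; have ex : exists n, (n <= size w)%N && `[< L (take n w) >].
  by exists (size w); rewrite leqnn take_size; apply/asboolP.
case: (ex_minnP ex) => n /andP[nw /asboolP Ln] nmin.
exists n => //; split => // k; rewrite size_takel // => kn.
rewrite take_takel ?(ltnW kn) // => Lk.
have /nmin : (k <= size w)%N && `[< L (take k w) >].
  by rewrite (leq_trans (ltnW kn) nw); apply/asboolP.
by rewrite leqNgt kn.
Qed.

Lemma prefix_minimal_restrict {A B} : A `<=` B ->
  prefix_minimal B `&` A `<=` prefix_minimal A.
Proof. by move=> AB w [[_ minw] Aw]; split => // k kw /AB; exact: minw. Qed.

Lemma prefix_minimalUl A B :
  prefix_minimal (prefix_minimal A `|` B) = prefix_minimal (A `|` B).
Proof.
apply/seteqP; split => w [ABw minw].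
  split; first by case: ABw => [/prefix_minimal_sub|]; [left|right].
  move=> k kw [Ak|Bk]; last by apply: (minw k kw); right.
  have [j jk minj] := prefix_minimal_exists Ak.
  have jk' : (j <= k)%N.
    by apply: leq_trans jk _; rewrite size_take_min geq_minl.
  rewrite take_takel // in minj.
  by apply: (minw j (leq_ltn_trans jk' kw)); left.
split; last by move=> k kw [/prefix_minimal_sub|] ?; apply: (minw k kw); [left|right].
case: ABw => [Aw|]; [left|by right].
by split => // k kw Ak; apply: (minw k kw); left.
Qed.

End PrefixMinimal.

Definition baire_cyl (sg : baire_space) (n : nat) : set baire_space :=
  [set t | forall j, (j < n)%N -> t j = sg j].

Lemma baire_cyl_nbhs sg n : nbhs sg (baire_cyl sg n).
Proof.
elim: n => [|n IH]; first by apply: filterS filterT => t _ j.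
have sgn : nbhs sg (proj n @^-1` [set sg n]).
  exact: (@proj_continuous nat (fun _ => nat) n sg).
apply: filterS (filterI IH sgn) => t [tn tsg] j.
by rewrite ltnS leq_eqVlt => /orP[/eqP ->|]; [exact: tsg | exact: tn].
Qed.

Lemma nbhs_baire_cyl {sg} {V : set baire_space} : nbhs sg V ->
  exists n, baire_cyl sg n `<=` V.
Proof.
move=> sgV; apply: contrapT => /forallNP noV.
have /choice[tau tauV] : forall n, exists t, baire_cyl sg n t /\ ~ V t.
  by move=> n; have /existsNP[t /not_implyP] := noV n; exists t.
have tau_sg : tau @ \oo --> sg.
  apply/(@pointwise_cvgP nat nat _ sg) => j; apply: cvg_near_cst.
  by exists j.+1 => // n /= jn; exact: (tauV n).1.
by have [n _ /(_ n (leqnn n))] := tau_sg V sgV; exact: (tauV n).2.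
Qed.

Definition box (m : nat -> nat) : set baire_space := [set t | forall j, (t j <= m j)%N].

Definition prefix_box (b : seq nat) : set baire_space :=
  [set t | forall j, (j < size b)%N -> (t j <= nth 0 b j)%N].

Lemma box_compact m : compact (box m).
Proof.
apply: (@tychonoff nat (fun _ => nat) (fun j => `I_(m j).+1)) => j.
exact/finite_compact/finite_II.
Qed.

(* Clamping by [m] keeps a point of [prefix_box (mkseq m k)] on its first [k]
   coordinates and moves it into [box m], where compactness applies. *)
Lemma box_tube {m} {V : set baire_space} : open V -> box m `<=` V ->
  exists k, prefix_box (mkseq m k) `<=` V.
Proof.
move=> oV mV; apply: contrapT => /forallNP noV.
have /choice[tau tauV] : forall k, exists t, prefix_box (mkseq m k) t /\ ~ V t.
  by move=> k; have /existsNP[t /not_implyP] := noV k; exists t.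
pose rho k : baire_space := fun j => minn (tau k j) (m j).
have rho_tau k j : (j < k)%N -> rho k j = tau k j.
  move=> jk; apply/minn_idPl.
  by have := (tauV k).1 j; rewrite size_mkseq nth_mkseq //; apply.
have rho_box : (rho @ \oo) (box m) by exists 0%N => // k _ j; exact: geq_minr.
have [sg [msg clsg]] := @box_compact m _ _ rho_box.
have [n nV] := nbhs_baire_cyl (open_nbhs_nbhs (conj oV (mV _ msg))).
have rho_tail : (rho @ \oo) (rho @` [set k | (n <= k)%N]).
  by exists n => // k nk; exists k.
have [_ [[k nk <-] rho_sg]] := clsg _ _ rho_tail (baire_cyl_nbhs sg n).
apply: (tauV k).2; apply: nV => j jn.
by rewrite -rho_tau ?(leq_trans jn nk) //; exact: rho_sg.
Qed.

Lemma prefix_box_nil : prefix_box [::] = setT.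
Proof. by apply/seteqP; split => // t _ j. Qed.

Lemma prefix_box_rcons_le b v :
  prefix_box (rcons b v) `<=` prefix_box (rcons b v.+1).
Proof.
move=> t tb j; rewrite size_rcons => jb; have := tb j.
rewrite size_rcons nth_rcons (nth_rcons _ _ v.+1) => /(_ jb).
by case: ltnP => // _; case: eqP => // _ /leq_trans; apply.
Qed.

Lemma bigcup_prefix_box_rcons b : \bigcup_v prefix_box (rcons b v) = prefix_box b.
Proof.
apply/seteqP; split => [t [v _ tbv] j jb|t tb].
  by have := tbv j; rewrite size_rcons nth_rcons jb; apply; exact: ltnW.
exists (t (size b)) => // j; rewrite size_rcons nth_rcons ltnS leq_eqVlt.
by case/orP => [/eqP ->|jb]; rewrite ?ltnn ?eqxx ?jb //; exact: tb.
Qed.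

Section Cylinders.
Context {R : realType} {X : metricType R}.
Variables (T : X -> X) (U : set (set X)).
Implicit Types (v w : seq (set X)).

Definition string_over w := forall j, (j < size w)%N -> U (nth set0 w j).

Lemma cyl_take w k : cyl T w `<=` cyl T (take k w).
Proof.
move=> x wx j; rewrite size_take_min leq_min => /andP[jk jw].
by rewrite nth_take //; exact: wx.
Qed.

Lemma cyl_prefix v w x : trivIset U id -> string_over v -> string_over w ->
  cyl T v x -> cyl T w x -> (size v <= size w)%N -> v = take (size v) w.
Proof.
move=> UD vU wU vx wx vw; apply: (@eq_from_nth _ set0); first by rewrite size_takel.
move=> j jv; have jw := leq_trans jv vw; rewrite nth_take //.
by apply: UD (vU j jv) (wU j jw) _; exists (iter j T x); split; [exact: vx | exact: wx].
Qed.

Lemma cyl_open w : continuous T -> (forall A, U A -> open A) -> string_over w ->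
  open (cyl T w).
Proof.
move=> cT Uo; elim: w => [|A w IH] Aw.
  by rewrite [cyl T [::]](_ : _ = setT); [exact: openT | apply/seteqP; split => // x _ j].
have -> : cyl T (A :: w) = A `&` T @^-1` cyl T w.
  apply/seteqP; split => [x Awx|x [Ax wTx] [|j] // jw]; last by rewrite iterSr; exact: wTx.
  by split=> [|j jw]; [exact: (Awx 0%N) | rewrite /= -iterSr; exact: (Awx j.+1)].
apply: openI; first exact/Uo/(Aw 0%N).
by apply: open_comp => [x _|]; [exact: cT | apply: IH => j; exact: (Aw j.+1)].
Qed.

End Cylinders.

Arguments cyl_prefix {R X T U v w x}.

Section MNs.
Context {R : realType} {X : metricType R}.
Variables (T : X -> X) (U : set (set X)) (f : X -> R) (s : R) (N : nat).
Implicit Types (Z : set X) (G L : set (seq (set X))).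
Local Notation W := (string_weight T f s).
Local Notation M := (MNs T U f N s).
Local Notation adm := (admissible T U N).

Lemma string_weight_ge0 w : (0 <= W w)%E.
Proof. exact: expeR_ge0. Qed.

Lemma MNs_le {Z L} : adm Z L -> (M Z <= esum L W)%E.
Proof. by move=> ZL; apply: ereal_inf_lbound; exists L. Qed.

Lemma MNs_ge0 Z : (0 <= M Z)%E.
Proof.
by apply: le_ereal_inf_tmp => _ [L _ <-]; apply: esum_ge0 => w _; exact: string_weight_ge0.
Qed.

Lemma le_MNs Z1 Z2 : Z1 `<=` Z2 -> (M Z1 <= M Z2)%E.
Proof.
move=> Z12; apply: le_ereal_inf_tmp => _ [L [Lstr Lcov] <-].
by apply: MNs_le; split => //; exact: subset_trans Lcov.
Qed.

Lemma admissible_string {Z L w} : adm Z L -> L w -> string_over U w.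
Proof. by move=> [Lstr _] /Lstr[]. Qed.

Lemma admissible_prefix_minimal {Z L} : adm Z L -> adm Z (prefix_minimal L).
Proof.
move=> [Lstr Lcov]; split=> [w /prefix_minimal_sub /Lstr //|x /Lcov[w Lw wx]].
have [k _ minwk] := prefix_minimal_exists Lw.
by exists (take k w) => //; exact: cyl_take.
Qed.

Hypothesis U_trivI : trivIset U id.

(* Replacing [G] by [prefix_minimal (G `|` L)] discards from [G] only strings
   that lie below a string of [L]: the discarded part of [G] and the strings of
   [L] not already kept still cover [E1], which bounds the discarded mass. *)
Lemma esum_prefix_minimalU {E1 E2 : set X} {G L} {d : \bar R} :
  E1 `<=` E2 -> adm E1 G -> adm E2 L -> esum G W \is a fin_num ->
  (esum G W <= M E1 + d)%E ->
  (esum (prefix_minimal (G `|` L)) W <= esum L W + d)%E.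
Proof.
move=> E12 aG aL Gfin GM; set H := prefix_minimal (G `|` L).
have W0 (A : set (seq (set X))) : forall w, A w -> (0 <= W w)%E.
  by move=> w _; exact: string_weight_ge0.
have cover : adm E1 ((G `&` ~` H) `|` (L `&` ~` (H `&` ~` G))).
  split=> [w [[/aG.1 //]|[/aL.1 //]]|x E1x].
  have [g Gg gx] := aG.2 x E1x; have [Hg|nHg] := pselect (H g); last by exists g => //; left.
  have [l Ll lx] := aL.2 x (E12 x E1x); exists l => //; right; split=> // -[Hl nGl].
  have gU := admissible_string aG Gg; have lU := admissible_string aL Ll.
  have [gl|lg] := ltnP (size g) (size l).
    by apply: (Hl.2 _ gl); left; rewrite -(cyl_prefix U_trivI gU lU gx lx (ltnW gl)).
  have l_g := cyl_prefix U_trivI lU gU lx gx lg.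
  have [lg'|gl'] := ltnP (size l) (size g); first by apply: (Hg.2 _ lg'); right; rewrite -l_g.
  by apply: nGl; rewrite l_g take_oversize.
have HGL : L `&` (H `&` ~` G) = H `&` ~` G.
  apply/seteqP; split=> [w [] //|w [Hw nGw]]; split=> //.
  by case: Hw.1.
have GHfin : esum (G `&` ~` H) W \is a fin_num.
  rewrite ge0_fin_numE; last exact: esum_ge0 (W0 _).
  apply: le_lt_trans (esum_subset W (@subIsetl _ _ _)) _.
  by rewrite -ge0_fin_numE //; exact: esum_ge0 (W0 G).
have HG : (esum (H `&` G) W <= esum (L `&` ~` (H `&` ~` G)) W + d)%E.
  rewrite -(leeD2lE _ _ GHfin) [X in (X <= _)%E]addeC (setIC H G) -(esumID H G W (W0 G)).
  apply: le_trans GM _; rewrite addeA; apply: leeD2r.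
  by apply: le_trans (MNs_le cover) _; apply: esum_setU_le; exact: W0.
rewrite (esumID G H W (W0 H)) (esumID (H `&` ~` G) L W (W0 L)) HGL addeC -addeA.
exact: leeD2l.
Qed.

Section Bigcup.
Variables (E_ : nat -> set X) (Lam : nat -> set (seq (set X))) (e : R).
Hypotheses (E_nd : forall i, E_ i `<=` E_ i.+1)
  (ME_fin : forall i, M (E_ i) \is a fin_num)
  (Lam_adm : forall i, adm (E_ i) (Lam i))
  (Lam_lt : forall i, (esum (Lam i) W < M (E_ i) + (e / 2 ^+ i.+1)%:E)%E).

Let Lam_upto i := \big[setU/set0]_(j < i.+1) Lam j.

Lemma admissible_upto i : adm (E_ i) (Lam_upto i).
Proof.
split=> [w|x Ex]; first by rewrite /Lam_upto -bigcup_mkord => -[j _ /(Lam_adm j).1].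
have [w Lw wx] := (Lam_adm i).2 x Ex; exists w => //.
exact: bigsetU_sup (ltnSn i) _ Lw.
Qed.

Lemma esum_prefix_minimal_upto i :
  (esum (prefix_minimal (Lam_upto i)) W <= M (E_ i) + (e - e / 2 ^+ i.+1)%:E)%E.
Proof.
elim: i => [|i IH].
  rewrite /Lam_upto big_ord1.
  apply: le_trans (esum_subset W (prefix_minimal_sub _)) _.
  apply: ltW; apply: lt_le_trans (Lam_lt 0) _.
  by apply: leeD2l; rewrite lee_fin expr1; lra.
have Gfin : esum (prefix_minimal (Lam_upto i)) W \is a fin_num.
  rewrite ge0_fin_numE; last by apply: esum_ge0 => w _; exact: string_weight_ge0.
  by apply: le_lt_trans IH _; rewrite ltey_eq fin_numD ME_fin.
rewrite /Lam_upto big_ord_recr /= -/(Lam_upto i) -prefix_minimalUl.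
apply: le_trans (esum_prefix_minimalU (E_nd i)
  (admissible_prefix_minimal (admissible_upto i)) (Lam_adm i.+1) Gfin IH) _.
apply: le_trans (leeD2r _ (ltW (Lam_lt i.+1))) _; rewrite -addeA -EFinD.
suff -> : (e / 2 ^+ i.+2 + (e - e / 2 ^+ i.+1) = e - e / 2 ^+ i.+2)%R by [].
by rewrite (exprS _ i.+1); field.
Qed.

Lemma MNs_bigcup_le : (0 <= e)%R ->
  (M (\bigcup_i E_ i) <= ereal_sup (range (fun i => M (E_ i))) + e%:E)%E.
Proof.
move=> e0; set Lmin := prefix_minimal (\bigcup_i Lam i).
have Lmin_adm : adm (\bigcup_i E_ i) Lmin.
  apply: admissible_prefix_minimal; split=> [w [j _ /(Lam_adm j).1 //]|x [i _ Ex]].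
  by have [w Lw wx] := (Lam_adm i).2 x Ex; exists w => //; exists i.
apply: le_trans (MNs_le Lmin_adm) _; apply: ge_ereal_sup => _ [F [finF FL] <-].
have [n Fn] := finite_subset_bigsetU finF (subset_trans FL (prefix_minimal_sub _)).
have Fupto : F `<=` prefix_minimal (Lam_upto n).
  move=> w Fw; apply: (prefix_minimal_restrict (@bigsetU_bigcup _ Lam n.+1)).
  by split; [exact: FL | rewrite /Lam_upto big_ord_recr; left; exact: Fn].
rewrite -esum_fset //; last by move=> w _; exact: string_weight_ge0.
apply: le_trans (esum_subset W Fupto) _; apply: le_trans (esum_prefix_minimal_upto n) _.
apply: leeD; first by apply: ereal_sup_ubound; exists n.
by rewrite lee_fin lerBlDr lerDl divr_ge0 // exprn_ge0.
Qed.

End Bigcup.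

Lemma MNs_bigcup (E_ : nat -> set X) : (forall i, E_ i `<=` E_ i.+1) ->
  M (\bigcup_i E_ i) = ereal_sup (range (fun i => M (E_ i))).
Proof.
move=> E_nd; apply/eqP; rewrite eq_le; apply/andP; split; last first.
  by apply: ge_ereal_sup => _ [i _ <-]; apply: le_MNs => x Ex; exists i.
set a := ereal_sup _; have Ma i : (M (E_ i) <= a)%E by apply: ereal_sup_ubound; exists i.
have [->|aoo] := eqVneq a +oo%E; first exact: leey.
have ME_fin i : M (E_ i) \is a fin_num.
  by rewrite ge0_fin_numE ?MNs_ge0 // (le_lt_trans (Ma i)) // lt_neqAle aoo leey.
apply/lee_addgt0Pr => e e0.
have /choice[Lam Lam_spec] : forall i, exists L,
    adm (E_ i) L /\ (esum L W < M (E_ i) + (e / 2 ^+ i.+1)%:E)%E.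
  move=> i; have : (M (E_ i) < M (E_ i) + (e / 2 ^+ i.+1)%:E)%E.
    by rewrite lteDl // lte_fin divr_gt0 // exprn_gt0.
  by move=> /ereal_inf_lt[_ [L aL <-] LM]; exists L.
exact: (MNs_bigcup_le _ _ _ E_nd ME_fin (fun i => (Lam_spec i).1) (fun i => (Lam_spec i).2)
  (ltW e0)).
Qed.

Lemma MNs_analytic_le_sup_compact Z :
  continuous T -> (forall A, U A -> open A) -> analytic Z ->
  (M Z <= ereal_sup [set M K | K in [set K | K `<=` Z /\ compact K]])%E.
Proof.
move=> cT Uo [g [cg <-]]; set S := ereal_sup _.
rewrite leNgt; apply/negP => /lte_EFin_between[r /andP[Sr rM]].
have [m rm] : exists m, forall k, (r%:E < M (g @` prefix_box (mkseq m k)))%E.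
  apply: (@branch_choice _ (fun b => r%:E < M (g @` prefix_box b))%E) => [|b rb].
    by rewrite prefix_box_nil.
  have : (r%:E < M (\bigcup_v g @` prefix_box (rcons b v)))%E.
    by rewrite -image_bigcup bigcup_prefix_box_rcons.
  rewrite MNs_bigcup => [/ereal_sup_gt[_ [v _ <-] rv]|v]; first by exists v.
  exact/image_subset/prefix_box_rcons_le.
have rK : (r%:E <= M (g @` box m))%E.
  apply: le_ereal_inf_tmp => _ [L aL <-].
  have oV : open (g @^-1` \bigcup_(w in L) cyl T w).
    apply: open_comp => [t _|]; first exact: cg.
    by apply: bigcup_open => w Lw; exact: cyl_open cT Uo (admissible_string aL Lw).
  have mV : box m `<=` g @^-1` \bigcup_(w in L) cyl T w by move=> t mt; apply: aL.2; exists t.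
  have [k kV] := box_tube oV mV.
  apply: ltW (lt_le_trans (rm k) (MNs_le _)); split=> [|_ [t kt <-]]; [exact: aL.1 | exact: kV].
have KS : (M (g @` box m) <= S)%E.
  apply: ereal_sup_ubound; exists (g @` box m) => //; split.
    by move=> _ [t _ <-]; exists t.
  by apply: continuous_compact; [exact: continuous_subspaceT | exact: box_compact].
by have := lt_le_trans Sr (le_trans rK KS); rewrite ltxx.
Qed.

End MNs.

Lemma clopen_partition_trivIset {R : realType} {X : metricType R} {U : set (set X)} :
  clopen_partition U -> trivIset U id.
Proof.
move=> [_ _ Udisj _ _] A B UA UB AB; apply: contrapT => nAB.
by move: AB; rewrite Udisj // => -[].
Qed.

Theorem lemma3p4 (R : realType) (X : metricType R) (T : X -> X)
  (U : set (set X)) (N : nat) (s : R) (f : X -> R) :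
  compact [set: X] -> continuous T -> clopen_partition U -> continuous f ->
  (forall (E_ : nat -> set X) (E : set X),
     (forall i, E_ i `<=` E_ i.+1) -> \bigcup_i E_ i = E ->
     (fun i => MNs T U f N s (E_ i)) @ \oo --> MNs T U f N s E) /\
  (forall Z : set X, analytic Z ->
     MNs T U f N s Z =
     ereal_sup [set MNs T U f N s K | K in [set K | K `<=` Z /\ compact K]]).
Proof.
move=> _ cT Upart _; have UD := clopen_partition_trivIset Upart.
have Uo A : U A -> open A by case: Upart => _ _ _ _ Uclopen /Uclopen[].
split=> [E_ E E_nd <-|Z Za].
  rewrite MNs_bigcup //; apply: ereal_nondecreasing_cvgn.
  by apply/nondecreasing_seqP => i; exact/le_MNs/E_nd.
apply/eqP; rewrite eq_le MNs_analytic_le_sup_compact //=.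
by apply: ge_ereal_sup => _ [K [KZ _] <-]; exact: le_MNs.
Qed.
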